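(* Let $\mathcal{C}$ be a category with finite coproducts and let $\mathbf{Mon}(\mathcal{C})$ be the category of monads on $\mathcal{C}$ and monad morphisms. The assignment sending a monad $M$ to its semifree monad $M^{\mathrm{s}}$ and a monad morphism $\sigma:M\Rightarrow T$ to $\sigma^{\mathrm{s}}$ with components $\sigma^{\mathrm{s}}_X=\mathrm{id}_X+\sigma_X: X+MX\to X+TX$ is a functor $(-)^{\mathrm{s}}:\mathbf{Mon}(\mathcal{C})\to\mathbf{Mon}(\mathcal{C})$ (in particular, $\sigma^{\mathrm{s}}$ is a monad morphism $M^{\mathrm{s}}\Rightarrow T^{\mathrm{s}}$).
   Context: For a monad $(M,\eta,\mu)$ on a category with finite coproducts, the semifree monad is $M^{\mathrm{s}}=\mathrm{Id}+M$ with unit $\eta^{\mathrm{s}}=\mathrm{inl}$ and multiplication $\mu^{\mathrm{s}}=[\mathrm{id}_{\mathrm{Id}+M},\ \mathrm{inr}\circ\mu\circ M[\eta,\mathrm{id}_M]]$, where $[f,g]$ denotes copairing. A monad morphism $\sigma:M\Rightarrow T$ is a natural transformation with $\sigma\circ\eta^M=\eta^T$ and $\sigma\circ\mu^M=\mu^T\circ\sigma_T\circ M\sigma$. *)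

Set Implicit Arguments.
Unset Strict Implicit.

(* A (locally small) category; equality of morphisms is Leibniz equality. *)
Record Category := {
  Obj :> Type;
  Hom : Obj -> Obj -> Type;
  idm : forall X, Hom X X;
  comp : forall X Y Z, Hom Y Z -> Hom X Y -> Hom X Z;
  comp_id_l : forall X Y (f : Hom X Y), comp (idm Y) f = f;
  comp_id_r : forall X Y (f : Hom X Y), comp f (idm X) = f;
  comp_assoc : forall X Y Z W (h : Hom Z W) (g : Hom Y Z) (f : Hom X Y),
      comp h (comp g f) = comp (comp h g) f
}.

Arguments Hom {c} _ _.
Arguments idm {c} _.
Arguments comp {c X Y Z} _ _.
Notation "g \o f" := (comp g f) (at level 40, left associativity).

Record FinCoproducts (C : Category) := {
  initial : Obj C;
  init_arr : forall X : Obj C, Hom initial X;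
  init_unique : forall X (h : Hom initial X), h = init_arr X;
  cp : Obj C -> Obj C -> Obj C;
  inl : forall X Y, Hom X (cp X Y);
  inr : forall X Y, Hom Y (cp X Y);
  copair : forall X Y Z, Hom X Z -> Hom Y Z -> Hom (cp X Y) Z;
  copair_inl : forall X Y Z (f : Hom X Z) (g : Hom Y Z), copair f g \o inl X Y = f;
  copair_inr : forall X Y Z (f : Hom X Z) (g : Hom Y Z), copair f g \o inr X Y = g;
  copair_unique : forall X Y Z (f : Hom X Z) (g : Hom Y Z) (h : Hom (cp X Y) Z),
      h \o inl X Y = f -> h \o inr X Y = g -> h = copair f g
}.

Arguments cp {C} _ _ _.
Arguments inl {C} _ _ _.
Arguments inr {C} _ _ _.
Arguments copair {C} _ {X Y Z} _ _.

Definition cpmap {C : Category} (CP : FinCoproducts C) {X Y X' Y' : Obj C}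
  (f : Hom X X') (g : Hom Y Y') : Hom (cp CP X Y) (cp CP X' Y') :=
  copair CP (inl CP X' Y' \o f) (inr CP X' Y' \o g).

Record MonadData (C : Category) := {
  mobj : Obj C -> Obj C;
  mmap : forall X Y, Hom X Y -> Hom (mobj X) (mobj Y);
  meta : forall X, Hom X (mobj X);
  mmu : forall X, Hom (mobj (mobj X)) (mobj X)
}.

Arguments mobj {C} _ _.
Arguments mmap {C} _ {X Y} _.
Arguments meta {C} _ _.
Arguments mmu {C} _ _.

Definition is_monad {C : Category} (M : MonadData C) : Prop :=
  (forall X, mmap M (idm X) = idm (mobj M X)) /\
  (forall X Y Z (g : Hom Y Z) (f : Hom X Y), mmap M (g \o f) = mmap M g \o mmap M f) /\
  (forall X Y (f : Hom X Y), mmap M f \o meta M X = meta M Y \o f) /\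
  (forall X Y (f : Hom X Y), mmap M f \o mmu M X = mmu M Y \o mmap M (mmap M f)) /\
  (forall X, mmu M X \o mmap M (mmu M X) = mmu M X \o mmu M (mobj M X)) /\
  (forall X, mmu M X \o meta M (mobj M X) = idm (mobj M X)) /\
  (forall X, mmu M X \o mmap M (meta M X) = idm (mobj M X)).

Definition is_monad_morphism {C : Category} (M T : MonadData C)
  (sigma : forall X, Hom (mobj M X) (mobj T X)) : Prop :=
  (forall X Y (f : Hom X Y), mmap T f \o sigma X = sigma Y \o mmap M f) /\
  (forall X, sigma X \o meta M X = meta T X) /\
  (forall X, sigma X \o mmu M X
             = mmu T X \o sigma (mobj T X) \o mmap M (sigma X)).

Definition semifree {C : Category} (CP : FinCoproducts C) (M : MonadData C)
  : MonadData C :=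
  {| mobj := fun X => cp CP X (mobj M X);
     mmap := fun X Y f => cpmap CP f (mmap M f);
     meta := fun X => inl CP X (mobj M X);
     mmu := fun X =>
       copair CP (idm (cp CP X (mobj M X)))
         (inr CP X (mobj M X) \o mmu M X
            \o mmap M (copair CP (meta M X) (idm (mobj M X)))) |}.

Definition semifree_mor {C : Category} (CP : FinCoproducts C) {M T : MonadData C}
  (sigma : forall X, Hom (mobj M X) (mobj T X))
  : forall X, Hom (mobj (semifree CP M) X) (mobj (semifree CP T) X) :=
  fun X => cpmap CP (idm X) (sigma X).
Arguments is_monad_morphism {C} M T sigma.
Arguments semifree_mor {C} CP {M T} sigma X.

(* Everything reduces to the collapse map [absorb = [eta, id] : X + MX -> MX].
   It is natural, it satisfies [absorb o mu^s = mu o M absorb o absorb], and it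
   commutes with every monad morphism ([absorb o sigma^s = sigma o absorb]).
   On the [inl] summand all laws of [M^s] and [sigma^s] hold trivially; on the
   [inr] summand these three facts reduce them to the corresponding laws of
   [M] and [sigma]. Functoriality of [(-)^s] is functoriality of [id + -]. *)


(* The implicit objects of [\o] often read [mobj (semifree CP M) X] where a
   lemma expects its value [cp CP X (mobj M X)]; keyed unification lets
   [rewrite] match up to this conversion. *)
Set Keyed Unification.

Lemma reassoc {C : Category} {X Y Z : Obj C}
  {g : Hom Y Z} {f : Hom X Y} {k : Hom X Z} (e : g \o f = k) :
  forall W (h : Hom W X), g \o (f \o h) = k \o h.
Proof. intros W h. rewrite comp_assoc, e. reflexivity. Qed.

Ltac assoc := repeat rewrite <- comp_assoc.

Section Coproducts.
Context {C : Category} {CP : FinCoproducts C}.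

Lemma copair_ext {X Y Z} (h k : Hom (cp CP X Y) Z) :
  h \o inl CP X Y = k \o inl CP X Y -> h \o inr CP X Y = k \o inr CP X Y -> h = k.
Proof.
  intros el er.
  rewrite (copair_unique el er).
  symmetry. apply copair_unique; reflexivity.
Qed.

Lemma cpmap_inl {X Y X' Y'} (f : Hom X X') (g : Hom Y Y') :
  cpmap CP f g \o inl CP X Y = inl CP X' Y' \o f.
Proof. apply copair_inl. Qed.

Lemma cpmap_inr {X Y X' Y'} (f : Hom X X') (g : Hom Y Y') :
  cpmap CP f g \o inr CP X Y = inr CP X' Y' \o g.
Proof. apply copair_inr. Qed.

Lemma cpmap_id X Y : cpmap CP (idm X) (idm Y) = idm (cp CP X Y).
Proof.
  apply copair_ext; rewrite cpmap_inl || rewrite cpmap_inr;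
    rewrite comp_id_l, comp_id_r; reflexivity.
Qed.

Lemma cpmap_comp {X Y X' Y' X'' Y''}
  (f : Hom X X') (g : Hom Y Y') (f' : Hom X' X'') (g' : Hom Y' Y'') :
  cpmap CP (f' \o f) (g' \o g) = cpmap CP f' g' \o cpmap CP f g.
Proof.
  apply copair_ext; assoc.
  - rewrite !cpmap_inl, (reassoc (cpmap_inl _ _)). apply comp_assoc.
  - rewrite !cpmap_inr, (reassoc (cpmap_inr _ _)). apply comp_assoc.
Qed.

End Coproducts.

Section MonadLaws.
Context {C : Category} {M : MonadData C}.
Hypothesis HM : is_monad M.

Lemma mmap_id X : mmap M (idm X) = idm (mobj M X).
Proof. destruct HM as (law & _). apply law. Qed.

Lemma mmap_comp {X Y Z} (g : Hom Y Z) (f : Hom X Y) :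
  mmap M (g \o f) = mmap M g \o mmap M f.
Proof. destruct HM as (_ & law & _). apply law. Qed.

Lemma meta_natural {X Y} (f : Hom X Y) : mmap M f \o meta M X = meta M Y \o f.
Proof. destruct HM as (_ & _ & law & _). apply law. Qed.

Lemma mmu_natural {X Y} (f : Hom X Y) :
  mmap M f \o mmu M X = mmu M Y \o mmap M (mmap M f).
Proof. destruct HM as (_ & _ & _ & law & _). apply law. Qed.

Lemma mmu_assoc X : mmu M X \o mmap M (mmu M X) = mmu M X \o mmu M (mobj M X).
Proof. destruct HM as (_ & _ & _ & _ & law & _). apply law. Qed.

Lemma mmu_meta X : mmu M X \o meta M (mobj M X) = idm (mobj M X).
Proof. destruct HM as (_ & _ & _ & _ & _ & law & _). apply law. Qed.

Lemma mmu_mmap_meta X : mmu M X \o mmap M (meta M X) = idm (mobj M X).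
Proof. destruct HM as (_ & _ & _ & _ & _ & _ & law). apply law. Qed.

End MonadLaws.

Section Semifree.
Context {C : Category} (CP : FinCoproducts C).

Definition absorb (M : MonadData C) X : Hom (cp CP X (mobj M X)) (mobj M X) :=
  copair CP (meta M X) (idm (mobj M X)).

Lemma absorb_inl M X : absorb M X \o inl CP X (mobj M X) = meta M X.
Proof. apply copair_inl. Qed.

Lemma absorb_inr M X : absorb M X \o inr CP X (mobj M X) = idm (mobj M X).
Proof. apply copair_inr. Qed.

Lemma semifree_mmap M {X Y} (f : Hom X Y) :
  mmap (semifree CP M) f = cpmap CP f (mmap M f).
Proof. reflexivity. Qed.

Lemma semifree_mmu_inl M X :
  mmu (semifree CP M) X \o inl CP _ _ = idm (mobj (semifree CP M) X).
Proof. apply copair_inl. Qed.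

Lemma semifree_mmu_inr M X :
  mmu (semifree CP M) X \o inr CP _ _
  = inr CP X (mobj M X) \o (mmu M X \o mmap M (absorb M X)).
Proof. rewrite comp_assoc. apply copair_inr. Qed.

Section SemifreeMonad.
Variable M : MonadData C.
Hypothesis HM : is_monad M.
Local Notation S := (semifree CP M).

Lemma absorb_natural X Y (f : Hom X Y) :
  absorb M Y \o mmap S f = mmap M f \o absorb M X.
Proof.
  apply copair_ext; assoc; rewrite semifree_mmap.
  - rewrite cpmap_inl, (reassoc (absorb_inl _ _)), absorb_inl.
    symmetry. apply meta_natural, HM.
  - rewrite cpmap_inr, (reassoc (absorb_inr _ _)), absorb_inr.
    rewrite comp_id_l, comp_id_r. reflexivity.
Qed.

Lemma absorb_mmu X :
  absorb M X \o mmu S X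
  = mmu M X \o (mmap M (absorb M X) \o absorb M (mobj S X)).
Proof.
  apply copair_ext; assoc.
  - rewrite semifree_mmu_inl, absorb_inl, comp_id_r.
    rewrite (meta_natural HM), (reassoc (mmu_meta HM _)), comp_id_l.
    reflexivity.
  - rewrite semifree_mmu_inr, absorb_inr, comp_id_r.
    rewrite (reassoc (absorb_inr _ _)), comp_id_l. reflexivity.
Qed.

Lemma semifree_mmu_natural X Y (f : Hom X Y) :
  mmap S f \o mmu S X = mmu S Y \o mmap S (mmap S f).
Proof.
  apply copair_ext; assoc; rewrite !(semifree_mmap M).
  - rewrite cpmap_inl, (reassoc (semifree_mmu_inl _ _)).
    rewrite semifree_mmu_inl, comp_id_l, comp_id_r. reflexivity.
  - rewrite cpmap_inr, (reassoc (semifree_mmu_inr _ _)), semifree_mmu_inr.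
    rewrite (reassoc (cpmap_inr _ _)). assoc.
    rewrite (reassoc (mmu_natural HM _)). assoc.
    rewrite <- !(mmap_comp HM), <- semifree_mmap, absorb_natural.
    reflexivity.
Qed.

Lemma semifree_mmu_assoc X :
  mmu S X \o mmap S (mmu S X) = mmu S X \o mmu S (mobj S X).
Proof.
  apply copair_ext; assoc; rewrite semifree_mmap.
  - rewrite cpmap_inl, (reassoc (semifree_mmu_inl _ _)), semifree_mmu_inl.
    rewrite comp_id_l, comp_id_r. reflexivity.
  - rewrite cpmap_inr, (reassoc (semifree_mmu_inr _ _)), semifree_mmu_inr.
    rewrite (reassoc (semifree_mmu_inr _ _)). assoc.
    rewrite <- (mmap_comp HM), absorb_mmu, !(mmap_comp HM).
    rewrite (reassoc (mmu_natural HM _)). assoc.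
    rewrite (reassoc (mmu_assoc HM _)). assoc.
    reflexivity.
Qed.

Lemma semifree_mmu_mmap_meta X :
  mmu S X \o mmap S (meta S X) = idm (mobj S X).
Proof.
  apply copair_ext; assoc; rewrite semifree_mmap, comp_id_l.
  - rewrite cpmap_inl, (reassoc (semifree_mmu_inl _ _)). apply comp_id_l.
  - rewrite cpmap_inr, (reassoc (semifree_mmu_inr _ _)). assoc.
    rewrite <- (mmap_comp HM), absorb_inl, (mmu_mmap_meta HM).
    apply comp_id_r.
Qed.

Lemma semifree_is_monad : is_monad S.
Proof.
  repeat split.
  - intros X. cbn. rewrite (mmap_id HM). apply cpmap_id.
  - intros X Y Z g f. cbn. rewrite (mmap_comp HM). apply cpmap_comp.
  - intros X Y f. apply cpmap_inl.
  - apply semifree_mmu_natural.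
  - apply semifree_mmu_assoc.
  - intros X. apply semifree_mmu_inl.
  - apply semifree_mmu_mmap_meta.
Qed.

End SemifreeMonad.

Lemma semifree_mor_inl {M T : MonadData C} (sigma : forall X, Hom (mobj M X) (mobj T X)) X :
  semifree_mor CP sigma X \o inl CP X (mobj M X) = inl CP X (mobj T X).
Proof. unfold semifree_mor. rewrite cpmap_inl. apply comp_id_r. Qed.

Lemma semifree_mor_inr {M T : MonadData C} (sigma : forall X, Hom (mobj M X) (mobj T X)) X :
  semifree_mor CP sigma X \o inr CP X (mobj M X) = inr CP X (mobj T X) \o sigma X.
Proof. apply cpmap_inr. Qed.

Lemma semifree_mor_id (M : MonadData C) X :
  semifree_mor CP (fun Y => idm (mobj M Y)) X = idm (mobj (semifree CP M) X).
Proof. apply cpmap_id. Qed.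

Lemma semifree_mor_comp {M T U : MonadData C}
  (sigma : forall X, Hom (mobj M X) (mobj T X))
  (tau : forall X, Hom (mobj T X) (mobj U X)) X :
  semifree_mor CP (fun Y => tau Y \o sigma Y) X
  = semifree_mor CP tau X \o semifree_mor CP sigma X.
Proof.
  unfold semifree_mor. rewrite <- cpmap_comp, comp_id_l. reflexivity.
Qed.

Section SemifreeMorphism.
Variables (M T : MonadData C) (sigma : forall X, Hom (mobj M X) (mobj T X)).
Hypothesis HM : is_monad M.
Hypothesis Hsigma : is_monad_morphism M T sigma.

Lemma absorb_semifree_mor X :
  absorb T X \o semifree_mor CP sigma X = sigma X \o absorb M X.
Proof.
  destruct Hsigma as (_ & sigma_meta & _).
  apply copair_ext; assoc.
  - rewrite semifree_mor_inl, !absorb_inl. symmetry. apply sigma_meta.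
  - rewrite semifree_mor_inr, (reassoc (absorb_inr _ _)), absorb_inr.
    rewrite comp_id_l, comp_id_r. reflexivity.
Qed.

Lemma semifree_mor_is_monad_morphism :
  is_monad_morphism (semifree CP M) (semifree CP T) (semifree_mor CP sigma).
Proof.
  pose proof Hsigma as (sigma_natural & _ & sigma_mmu).
  split; [|split].
  - intros X Y f. rewrite !semifree_mmap. unfold semifree_mor.
    rewrite <- !cpmap_comp, comp_id_l, comp_id_r, sigma_natural. reflexivity.
  - apply semifree_mor_inl.
  - intros X. apply copair_ext; assoc; rewrite semifree_mmap.
    + rewrite semifree_mmu_inl, cpmap_inl, (reassoc (semifree_mor_inl _ _)).
      rewrite (reassoc (semifree_mmu_inl _ _)), comp_id_l, comp_id_r.
      reflexivity.
    + rewrite semifree_mmu_inr, cpmap_inr.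
      rewrite (reassoc (semifree_mor_inr _ _)), (reassoc (semifree_mor_inr _ _)).
      assoc. rewrite (reassoc (semifree_mmu_inr _ _)). assoc.
      rewrite (reassoc (sigma_mmu _)). assoc.
      rewrite (reassoc (sigma_natural _ _ _)). assoc.
      rewrite <- !(mmap_comp HM), absorb_semifree_mor. reflexivity.
Qed.

End SemifreeMorphism.

End Semifree.

Theorem lemma4 (C : Category) (CP : FinCoproducts C) :
  (* object part: M^s is a monad *)
  (forall M : MonadData C, is_monad M -> is_monad (semifree CP M)) /\
  (* morphism part: sigma^s is a monad morphism M^s => T^s *)
  (forall (M T : MonadData C) (sigma : forall X, Hom (mobj M X) (mobj T X)),
     is_monad M -> is_monad T -> is_monad_morphism M T sigma ->
     is_monad_morphism (semifree CP M) (semifree CP T) (semifree_mor CP sigma)) /\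
  (* preservation of identities *)
  (forall M : MonadData C, is_monad M ->
     forall X, semifree_mor CP (fun Y => idm (mobj M Y)) X
               = idm (mobj (semifree CP M) X)) /\
  (* preservation of composition *)
  (forall (M T S : MonadData C)
          (sigma : forall X, Hom (mobj M X) (mobj T X))
          (tau : forall X, Hom (mobj T X) (mobj S X)),
     is_monad M -> is_monad T -> is_monad S ->
     is_monad_morphism M T sigma -> is_monad_morphism T S tau ->
     forall X, semifree_mor CP (fun Y => tau Y \o sigma Y) X
               = semifree_mor CP tau X \o semifree_mor CP sigma X).
Proof.
  split; [|split; [|split]].
  - intros M HM. apply semifree_is_monad, HM.
  - intros M T sigma HM _ Hsigma. apply semifree_mor_is_monad_morphism; assumption.
  - intros M _ X. apply semifree_mor_id.
  - intros M T S sigma tau _ _ _ _ _ X. apply semifree_mor_comp.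
Qed.
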